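(* Let $p\ge 2$. There is no pair $(\vec\psi, D)$, where $\vec\psi=(\psi_1,\dots,\psi_N)$, $N=\tfrac12(p+1)(p+2)$, is a basis of $\mathcal{T}(p)$ suitable for continuous finite elements (consisting of one vertex function for each of the three vertices, $p-1$ edge functions for each of the three edges, and $\tfrac12(p-1)(p-2)$ interior functions) and $D$ is a nonsingular real diagonal $N\times N$ matrix, such that $D$ is a $(p-1)$-exact pseudo-mass matrix for $\vec\psi$, i.e. such that for every $f\in\mathcal{T}(p-1)$ the vector $\vec u=D^{-1}\int_{\Omega_{ref}} f\,\vec\psi\,d\Omega$ satisfies $\vec u^{\,T}\vec\psi=f$ on $\Omega_{ref}$.
   Context: $\Omega_{ref}=\{(r,s): -1\le r,\ -1\le s,\ r+s\le 0\}$ with vertices $V_A=(-1,1)$, $V_B=(-1,-1)$, $V_C=(1,-1)$; edge $E_{\mathcal A}$ is the edge from $V_B$ to $V_C$ (opposite $V_A$), $E_{\mathcal B}$ the edge from $V_C$ to $V_A$ (opposite $V_B$), $E_{\mathcal C}$ the edge from $V_A$ to $V_B$ (opposite $V_C$). $\mathcal{T}(q)=\mathrm{span}\{r^ns^m: m,n\ge0,\ m+n\le q\}$. A vertex function (for a given vertex) is a function on $\Omega_{ref}$ that is nonzero at only that vertex among the three vertices and vanishes identically on the opposite edge. An edge function (for a given edge) is a function that is nonzero along only that edge and vanishes identically on the other two edges. An interior function is a nonzero function vanishing identically on all three edges. A nonsingular matrix $\underline{M}$ is called a $k$-exact pseudo-mass matrix for the basis $\vec\psi$ if $\vec u=\underline{M}^{-1}\int_{\Omega_{ref}}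 f\vec\psi\,d\Omega$ satisfies $\vec u^{\,T}\vec\psi=f$ for all $f\in\mathcal{T}(k)$. *)

From Stdlib Require Import Reals Lra List Arith ClassicalEpsilon ClassicalDescription.
Open Scope R_scope.

Definition sumN (n : nat) (F : nat -> R) : R :=
  fold_right (fun i acc => F i + acc) 0 (seq 0 n).

(* total Riemann integral: the Riemann integral of f over [a,b] when it exists, 0 otherwise *)
Definition Rint (f : R -> R) (a b : R) : R :=
  match excluded_middle_informative (inhabited (Riemann_integrable f a b)) with
  | left H => RiemannInt (epsilon H (fun _ => True))
  | right _ => 0
  end.

Definition in_tri (r s : R) : Prop := -1 <= r /\ -1 <= s /\ r + s <= 0.

Definition int_ref (g : R -> R -> R) : R :=
  Rint (fun r => Rint (fun s => g r s) (-1) (-r)) (-1) 1.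

Definition in_T (q : nat) (f : R -> R -> R) : Prop :=
  exists c : nat -> nat -> R, forall r s : R,
    f r s = sumN (S q) (fun n => sumN (S (q - n)) (fun m => c n m * r ^ n * s ^ m)).

Inductive label := LA | LB | LC.

Definition vertex (l : label) : R * R :=
  match l with LA => (-1, 1) | LB => (-1, -1) | LC => (1, -1) end.

(* E_A from V_B to V_C, E_B from V_C to V_A, E_C from V_A to V_B *)
Definition on_edge (l : label) (r s : R) : Prop :=
  match l with
  | LA => -1 <= r <= 1 /\ s = -1
  | LB => -1 <= r <= 1 /\ r + s = 0
  | LC => r = -1 /\ -1 <= s <= 1
  end.

Definition vertex_function (l : label) (f : R -> R -> R) : Prop :=
  (forall l', f (fst (vertex l')) (snd (vertex l')) <> 0 <-> l' = l) /\
  (forall r s, on_edge l r s -> f r s = 0).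

Definition edge_function (l : label) (f : R -> R -> R) : Prop :=
  (exists r s, on_edge l r s /\ f r s <> 0) /\
  (forall l' r s, l' <> l -> on_edge l' r s -> f r s = 0).

Definition interior_function (f : R -> R -> R) : Prop :=
  (exists r s, in_tri r s /\ f r s <> 0) /\
  (forall l r s, on_edge l r s -> f r s = 0).

Inductive kind := KVert (l : label) | KEdge (l : label) | KInt.

Definition label_eqb (a b : label) : bool :=
  match a, b with LA, LA | LB, LB | LC, LC => true | _, _ => false end.

Definition kind_eqb (a b : kind) : bool :=
  match a, b with
  | KVert x, KVert y => label_eqb x y
  | KEdge x, KEdge y => label_eqb x y
  | KInt, KInt => true
  | _, _ => false
  end.

Definition has_kind (k : kind) (f : R -> R -> R) : Prop :=
  match k with
  | KVert l => vertex_function l f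
  | KEdge l => edge_function l f
  | KInt => interior_function f
  end.

Definition dimT (p : nat) : nat := ((p + 1) * (p + 2) / 2)%nat.

Definition is_basis (p : nat) (psi : nat -> R -> R -> R) : Prop :=
  (forall i, (i < dimT p)%nat -> in_T p (psi i)) /\
  (forall a : nat -> R,
      (forall r s, in_tri r s -> sumN (dimT p) (fun i => a i * psi i r s) = 0) ->
      forall i, (i < dimT p)%nat -> a i = 0) /\
  (forall f, in_T p f -> exists a : nat -> R,
      forall r s, in_tri r s -> f r s = sumN (dimT p) (fun i => a i * psi i r s)).

Definition count_kind (N : nat) (kd : nat -> kind) (k : kind) : nat :=
  length (filter (fun i => kind_eqb (kd i) k) (seq 0 N)).

Definition fe_suitable (p : nat) (psi : nat -> R -> R -> R) : Prop :=
  exists kd : nat -> kind,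
    (forall i, (i < dimT p)%nat -> has_kind (kd i) (psi i)) /\
    (forall l, count_kind (dimT p) kd (KVert l) = 1%nat) /\
    (forall l, count_kind (dimT p) kd (KEdge l) = (p - 1)%nat) /\
    count_kind (dimT p) kd KInt = ((p - 1) * (p - 2) / 2)%nat.

Definition diag_pseudo_mass_exact (k N : nat) (psi : nat -> R -> R -> R) (d : nat -> R) : Prop :=
  forall f, in_T k f ->
    forall r s, in_tri r s ->
      sumN N (fun i => (/ d i * int_ref (fun x y => f x y * psi i x y)) * psi i r s) = f r s.

From Stdlib Require Import Reals.
Open Scope R_scope.
From Coquelicot Require Import Coquelicot.
From Stdlib Require Import Lra Lia List Arith FunctionalExtensionality.

(* Suppose it does, and let psi_e be an edge function of E_A, nonzero at a point
   (r0,-1) of E_A.  Put w_j = psi_j(r0,-1) / d_j for the edge functions j of E_A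
   (w_j = 0 otherwise) and Psi = sum_j w_j psi_j, an element of T(p).  Psi vanishes
   on E_B and E_C, which are {u = 0} and {t = 0} in the coordinates u = r + 1,
   t = -(r + s); hence Psi = u t H with H in T(p-2).  The function f = (s + 1) H
   lies in T(p-1) and vanishes on E_A, so exactness at V_B and V_C kills the
   coefficients of their vertex functions, and exactness at (r0,-1) then reads
   0 = sum_j w_j int f psi_j = int f Psi.  But f Psi = (s+1)(r+1)(-(r+s)) H^2 is
   nonnegative on Omega_ref, so it vanishes in the interior, hence Psi = 0 on
   Omega_ref by continuity, and linear independence forces w = 0, contradicting
   psi_e(r0,-1) <> 0. *)

Lemma fold_sum_shift (F : nat -> R) (l : list nat) (x : R) :
  fold_right (fun i acc => F i + acc) x l = fold_right (fun i acc => F i + acc) 0 l + x.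
Proof. induction l; simpl; [lra | rewrite IHl; lra]. Qed.

Lemma sumN_S n F : sumN (S n) F = sumN n F + F n.
Proof. unfold sumN; rewrite seq_S, fold_right_app; simpl; rewrite fold_sum_shift; ring. Qed.

Lemma sumN_ext n F G : (forall i, (i < n)%nat -> F i = G i) -> sumN n F = sumN n G.
Proof. induction n; intros H; [reflexivity |]. rewrite !sumN_S, IHn, H; auto. Qed.

Lemma sumN_plus n F G : sumN n (fun i => F i + G i) = sumN n F + sumN n G.
Proof. induction n; [unfold sumN; simpl; ring |]. rewrite !sumN_S, IHn; ring. Qed.

Lemma sumN_scal n k F : sumN n (fun i => k * F i) = k * sumN n F.
Proof. induction n; [unfold sumN; simpl; ring |]. rewrite !sumN_S, IHn; ring. Qed.

Lemma sumN_zero n F : (forall i, (i < n)%nat -> F i = 0) -> sumN n F = 0.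
Proof. induction n; intros H; [reflexivity |]. rewrite sumN_S, IHn, H; auto; ring. Qed.

Lemma sumN_Sl n F : sumN (S n) F = F 0%nat + sumN n (fun i => F (S i)).
Proof. induction n; [unfold sumN; simpl; ring |]. rewrite sumN_S, IHn, sumN_S; ring. Qed.

Lemma sumN_pad n n' F : (n <= n')%nat ->
  (forall i, (n <= i < n')%nat -> F i = 0) -> sumN n' F = sumN n F.
Proof.
  induction 1; intros HF; [reflexivity |].
  rewrite sumN_S, IHle, HF; [ring | lia |]. intros; apply HF; lia.
Qed.

Lemma sumN_single n F k : (k < n)%nat ->
  (forall i, (i < n)%nat -> i <> k -> F i = 0) -> sumN n F = F k.
Proof.
  induction n; intros Hk H; [lia |]. rewrite sumN_S. destruct (Nat.eq_dec k n).
  - subst. rewrite sumN_zero; [ring |]. intros; apply H; lia.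
  - rewrite IHn, (H n); auto; try lia; ring.
Qed.

(** * Polynomials in two coordinate functions *)

Definition bipoly (K : nat) (c : nat -> nat -> R) (u v : R) : R :=
  sumN K (fun n => sumN K (fun m => c n m * u ^ n * v ^ m)).

Definition poly_in (a b : R -> R -> R) (q : nat) (f : R -> R -> R) : Prop :=
  exists K c, (forall n m, (K <= n \/ K <= m)%nat -> c n m = 0) /\
    (forall n m, (q < n + m)%nat -> c n m = 0) /\
    forall x y, f x y = bipoly K c (a x y) (b x y).

Lemma bipoly_pad K K' c u v : (forall n m, (K <= n \/ K <= m)%nat -> c n m = 0) ->
  (K <= K')%nat -> bipoly K' c u v = bipoly K c u v.
Proof.
  intros Hc HK; unfold bipoly. rewrite (sumN_pad K K'); auto.
  - apply sumN_ext; intros n Hn. apply sumN_pad; auto.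
    intros m Hm; rewrite Hc; [ring | lia].
  - intros n Hn; apply sumN_zero; intros m _; rewrite Hc; [ring | lia].
Qed.

Lemma bipoly_plus K c1 c2 u v :
  bipoly K (fun n m => c1 n m + c2 n m) u v = bipoly K c1 u v + bipoly K c2 u v.
Proof.
  unfold bipoly; rewrite <- sumN_plus; apply sumN_ext; intros.
  rewrite <- sumN_plus; apply sumN_ext; intros; ring.
Qed.

Lemma bipoly_scal K k c u v : bipoly K (fun n m => k * c n m) u v = k * bipoly K c u v.
Proof.
  unfold bipoly; rewrite <- sumN_scal; apply sumN_ext; intros.
  rewrite <- sumN_scal; apply sumN_ext; intros; ring.
Qed.

Lemma bipoly_split K c u t : bipoly (S K) c u t =
  sumN (S K) (fun m => c 0%nat m * t ^ m) + sumN K (fun n => c (S n) 0%nat * u ^ S n) +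
  u * t * bipoly K (fun n m => c (S n) (S m)) u t.
Proof.
  unfold bipoly. rewrite sumN_Sl.
  rewrite (sumN_ext K _ (fun n => c (S n) 0%nat * u ^ S n +
      u * t * sumN K (fun m => c (S n) (S m) * u ^ n * t ^ m))).
  - rewrite sumN_plus, sumN_scal.
    rewrite (sumN_ext (S K) (fun m => c 0%nat m * u ^ 0 * t ^ m) (fun m => c 0%nat m * t ^ m))
      by (intros; simpl; ring).
    ring.
  - intros n _. rewrite sumN_Sl, <- sumN_scal. simpl. f_equal; [ring |].
    apply sumN_ext; intros; simpl; ring.
Qed.

Section PolyIn.
Variables a b : R -> R -> R.

Lemma poly_in_ext q f g : (forall x y, f x y = g x y) -> poly_in a b q f -> poly_in a b q g.
Proof.
  intros H [K [c [H1 [H2 H3]]]]; exists K, c; repeat split; auto.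
  intros; rewrite <- H; auto.
Qed.

Lemma poly_in_weaken q q' f : (q <= q')%nat -> poly_in a b q f -> poly_in a b q' f.
Proof. intros Hq [K [c [H1 [H2 H3]]]]; exists K, c; repeat split; auto. intros; apply H2; lia. Qed.

Lemma poly_in_zero q : poly_in a b q (fun _ _ => 0).
Proof. exists 0%nat, (fun _ _ => 0); repeat split; auto. Qed.

Lemma poly_in_const k : poly_in a b 0 (fun _ _ => k).
Proof.
  exists 1%nat, (fun n m => match n, m with O, O => k | _, _ => 0 end); repeat split.
  - intros [|n] [|m] H; auto; lia.
  - intros [|n] [|m] H; auto; simpl in H; lia.
  - intros; unfold bipoly, sumN; simpl; ring.
Qed.

Lemma poly_in_fst : poly_in a b 1 a.
Proof.
  exists 2%nat, (fun n m => match n, m with 1, O => 1 | _, _ => 0 end); repeat split.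
  - intros [|[|n]] [|m] H; auto; lia.
  - intros [|[|n]] [|m] H; auto; simpl in H; lia.
  - intros; unfold bipoly, sumN; simpl; ring.
Qed.

Lemma poly_in_snd : poly_in a b 1 b.
Proof.
  exists 2%nat, (fun n m => match n, m with O, 1 => 1 | _, _ => 0 end); repeat split.
  - intros [|n] [|[|m]] H; auto; lia.
  - intros [|n] [|[|m]] H; auto; simpl in H; lia.
  - intros; unfold bipoly, sumN; simpl; ring.
Qed.

Lemma poly_in_add q f g :
  poly_in a b q f -> poly_in a b q g -> poly_in a b q (fun x y => f x y + g x y).
Proof.
  intros [K1 [c1 [H1 [H2 H3]]]] [K2 [c2 [G1 [G2 G3]]]].
  exists (Nat.max K1 K2), (fun n m => c1 n m + c2 n m); repeat split.
  - intros n m H; rewrite H1, G1; try ring; lia.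
  - intros n m H; rewrite H2, G2; auto; ring.
  - intros x y; rewrite bipoly_plus, H3, G3,
      (bipoly_pad K1 (Nat.max K1 K2) c1), (bipoly_pad K2 (Nat.max K1 K2) c2); auto; lia.
Qed.

Lemma poly_in_scal q k f : poly_in a b q f -> poly_in a b q (fun x y => k * f x y).
Proof.
  intros [K [c [H1 [H2 H3]]]]; exists K, (fun n m => k * c n m); repeat split.
  - intros n m H; rewrite H1; auto; ring.
  - intros n m H; rewrite H2; auto; ring.
  - intros; rewrite bipoly_scal, H3; auto.
Qed.

Lemma poly_in_affine al be ga :
  poly_in a b 1 (fun x y => al * a x y + be * b x y + ga).
Proof.
  apply poly_in_add.
  - apply poly_in_add; apply poly_in_scal; [apply poly_in_fst | apply poly_in_snd].
  - apply (poly_in_weaken 0); [lia | apply poly_in_const].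
Qed.

Lemma poly_in_mul_fst q f : poly_in a b q f -> poly_in a b (S q) (fun x y => a x y * f x y).
Proof.
  intros [K [c [H1 [H2 H3]]]].
  exists (S K), (fun n m => match n with O => 0 | S n' => c n' m end); repeat split.
  - intros [|n] m H; auto; apply H1; lia.
  - intros [|n] m H; auto; apply H2; lia.
  - intros x y; rewrite H3; unfold bipoly.
    rewrite sumN_Sl, (sumN_zero (S K) (fun m => 0 * _ * _)) by (intros; ring).
    rewrite Rplus_0_l, <- sumN_scal; apply sumN_ext; intros n Hn.
    rewrite sumN_S, H1 by lia. rewrite <- sumN_scal; simpl.
    rewrite Rmult_0_l, Rmult_0_l, Rplus_0_r. apply sumN_ext; intros; ring.
Qed.

Lemma poly_in_mul_snd q f : poly_in a b q f -> poly_in a b (S q) (fun x y => b x y * f x y).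
Proof.
  intros [K [c [H1 [H2 H3]]]].
  exists (S K), (fun n m => match m with O => 0 | S m' => c n m' end); repeat split.
  - intros n [|m] H; auto; apply H1; lia.
  - intros n [|m] H; auto; apply H2; lia.
  - intros x y; rewrite H3; unfold bipoly. rewrite sumN_S.
    rewrite (sumN_zero (S K) (fun m => _)) by (intros [|m] _; [| rewrite H1 by lia]; ring).
    rewrite Rplus_0_r, <- sumN_scal; apply sumN_ext; intros n Hn.
    rewrite sumN_Sl, <- sumN_scal; simpl. rewrite Rmult_0_l, !Rmult_0_l, Rplus_0_l.
    apply sumN_ext; intros; ring.
Qed.

Lemma poly_in_sum q N (F : nat -> R -> R -> R) : (forall i, (i < N)%nat -> poly_in a b q (F i)) ->
  poly_in a b q (fun x y => sumN N (fun i => F i x y)).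
Proof.
  induction N; intros H; [apply poly_in_zero |].
  apply (poly_in_ext _ (fun x y => sumN N (fun i => F i x y) + F N x y)).
  - intros; rewrite sumN_S; auto.
  - apply poly_in_add; auto.
Qed.

Lemma poly_in_monomial_mul q g n m : poly_in a b q g ->
  poly_in a b (n + m + q) (fun x y => a x y ^ n * b x y ^ m * g x y).
Proof.
  intros Hg. induction n.
  - induction m; simpl.
    + apply (poly_in_ext _ g); auto; intros; ring.
    + eapply poly_in_ext; [| apply poly_in_mul_snd, IHm]. intros; simpl; ring.
  - eapply poly_in_ext; [| apply poly_in_mul_fst, IHn]. intros; simpl; ring.
Qed.

Lemma poly_in_mul q1 q2 f g : poly_in a b q1 f -> poly_in a b q2 g ->
  poly_in a b (q1 + q2) (fun x y => f x y * g x y).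
Proof.
  intros [K [c [H1 [H2 H3]]]] Hg.
  apply (poly_in_ext _ (fun x y => sumN K (fun n => sumN K (fun m =>
     c n m * (a x y ^ n * b x y ^ m * g x y))))).
  - intros x y; rewrite H3; unfold bipoly. rewrite Rmult_comm, <- sumN_scal.
    apply sumN_ext; intros. rewrite <- sumN_scal; apply sumN_ext; intros; ring.
  - apply poly_in_sum; intros n _; apply poly_in_sum; intros m _.
    destruct (le_lt_dec (n + m) q1) as [Hle | Hlt].
    + apply poly_in_scal, (poly_in_weaken (n + m + q2)); [lia |]. apply poly_in_monomial_mul; auto.
    + eapply poly_in_ext; [| apply poly_in_zero]. intros; rewrite H2; auto; ring.
Qed.

Lemma poly_in_pow h n : poly_in a b 1 h -> poly_in a b n (fun x y => h x y ^ n).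
Proof.
  intros Hh; induction n; simpl; [apply poly_in_const |].
  apply (poly_in_mul 1 n); auto.
Qed.

End PolyIn.

Lemma poly_in_subst a b a' b' q f :
  poly_in a b 1 a' -> poly_in a b 1 b' -> poly_in a' b' q f -> poly_in a b q f.
Proof.
  intros Ha Hb [K [c [H1 [H2 H3]]]].
  apply (poly_in_ext _ _ _ (fun x y => sumN K (fun n => sumN K (fun m =>
     c n m * (a' x y ^ n * b' x y ^ m))))).
  - intros x y; rewrite H3; unfold bipoly; apply sumN_ext; intros; apply sumN_ext; intros; ring.
  - apply poly_in_sum; intros n _; apply poly_in_sum; intros m _.
    destruct (le_lt_dec (n + m) q) as [Hle | Hlt].
    + apply poly_in_scal, (poly_in_weaken _ _ (n + m)); [lia |].
      apply poly_in_mul; apply poly_in_pow; auto.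
    + eapply poly_in_ext; [| apply poly_in_zero]. intros; rewrite H2; auto; ring.
Qed.

(** * Cartesian and edge-adapted coordinates on Omega_ref *)

(* Cartesian coordinates (r, s), and u = r + 1, t = -(r + s), which vanish on
   the edges E_C and E_B respectively. *)
Definition coord_r (r s : R) : R := r.
Definition coord_s (r s : R) : R := s.
Definition coord_u (r s : R) : R := r + 1.
Definition coord_t (r s : R) : R := - (r + s).

Lemma sum_triangle_pad q M (F : nat -> nat -> R) : (S q <= M)%nat ->
  (forall n m, (q < n + m)%nat -> F n m = 0) ->
  sumN (S q) (fun n => sumN (S (q - n)) (F n)) = sumN M (fun n => sumN M (F n)).
Proof.
  intros HM HF. rewrite (sumN_pad (S q) M); auto.
  - apply sumN_ext; intros n Hn. symmetry; apply sumN_pad; [lia |]. intros; apply HF; lia.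
  - intros n Hn; apply sumN_zero; intros; apply HF; lia.
Qed.

Lemma in_T_poly_in q f : in_T q f -> poly_in coord_r coord_s q f.
Proof.
  intros [c Hc].
  exists (S q), (fun n m => if (n + m <=? q)%nat then c n m else 0); repeat split.
  - intros n m H; destruct (Nat.leb_spec (n + m) q); auto; lia.
  - intros n m H; destruct (Nat.leb_spec (n + m) q); auto; lia.
  - intros x y; rewrite Hc; unfold bipoly, coord_r, coord_s.
    rewrite <- (sum_triangle_pad q (S q)
      (fun n m => (if (n + m <=? q)%nat then c n m else 0) * x ^ n * y ^ m)); auto.
    + apply sumN_ext; intros n Hn; apply sumN_ext; intros m Hm.
      destruct (Nat.leb_spec (n + m) q); auto; lia.
    + intros n m H; destruct (Nat.leb_spec (n + m) q); [lia | ring].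
Qed.

Lemma poly_in_in_T q f : poly_in coord_r coord_s q f -> in_T q f.
Proof.
  intros [K [c [H1 [H2 H3]]]]. exists c; intros x y.
  rewrite H3, <- (bipoly_pad K (Nat.max K (S q))) by (auto; lia). unfold bipoly, coord_r, coord_s.
  rewrite (sum_triangle_pad q (Nat.max K (S q)) (fun n m => c n m * x ^ n * y ^ m));
    [reflexivity | lia |].
  intros n m H; rewrite H2; auto; ring.
Qed.

Lemma rs_to_ut q f : poly_in coord_r coord_s q f -> poly_in coord_u coord_t q f.
Proof.
  apply poly_in_subst.
  - apply (poly_in_ext _ _ _ (fun x y => 1 * coord_u x y + 0 * coord_t x y + -1)),
      poly_in_affine. intros; unfold coord_u, coord_r; ring.
  - apply (poly_in_ext _ _ _ (fun x y => -1 * coord_u x y + -1 * coord_t x y + 1)),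
      poly_in_affine. intros; unfold coord_u, coord_t, coord_s; ring.
Qed.

Lemma ut_to_rs q f : poly_in coord_u coord_t q f -> poly_in coord_r coord_s q f.
Proof.
  apply poly_in_subst.
  - apply (poly_in_ext _ _ _ (fun x y => 1 * coord_r x y + 0 * coord_s x y + 1)),
      poly_in_affine. intros; unfold coord_u, coord_r; ring.
  - apply (poly_in_ext _ _ _ (fun x y => -1 * coord_r x y + -1 * coord_s x y + 0)),
      poly_in_affine. intros; unfold coord_r, coord_t, coord_s; ring.
Qed.

(* A polynomial vanishing on the edges E_B = {t = 0} and E_C = {u = 0} of
   Omega_ref is divisible by u t there: its monomials not divisible by u t are
   determined by its values on these two edges. *)
Lemma factor_edges_BC q G : poly_in coord_u coord_t q G ->
  (forall r s, on_edge LB r s -> G r s = 0) ->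
  (forall r s, on_edge LC r s -> G r s = 0) ->
  exists H, poly_in coord_u coord_t (q - 2) H /\
    forall r s, in_tri r s -> G r s = coord_u r s * coord_t r s * H r s.
Proof.
  intros [K [c [H1 [H2 H3]]]] HB HC.
  exists (fun x y => bipoly K (fun n m => c (S n) (S m)) (coord_u x y) (coord_t x y)). split.
  { exists K, (fun n m => c (S n) (S m)); repeat split; auto.
    - intros n m Hnm; apply H1; lia.
    - intros n m Hnm; apply H2; lia. }
  assert (E : forall x y, G x y = bipoly (S K) c (coord_u x y) (coord_t x y)).
  { intros; rewrite H3; symmetry; apply bipoly_pad; auto. }
  assert (Zpow : forall k, 0 ^ S k = 0) by (intros; simpl; ring).
  unfold coord_u, coord_t in *.
  (* the part of G depending on t alone is G restricted to E_C *)
  assert (Ht_part : forall t, 0 <= t <= 2 -> sumN (S K) (fun m => c 0%nat m * t ^ m) = 0).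
  { intros t Ht. rewrite <- (HC (-1) (1 - t)) by (simpl; lra). rewrite E, bipoly_split.
    replace (-1 + 1) with 0 by ring. replace (- (-1 + (1 - t))) with t by ring.
    rewrite (sumN_zero K (fun n => _ * 0 ^ S n)) by (intros; rewrite Zpow; ring). ring. }
  (* the part of G depending on u alone is G restricted to E_B *)
  assert (Hu_part : forall x, -1 <= x <= 1 ->
    c 0%nat 0%nat + sumN K (fun n => c (S n) 0%nat * (x + 1) ^ S n) = 0).
  { intros x Hx. rewrite <- (HB x (- x)) by (simpl; lra). rewrite E, bipoly_split.
    replace (- (x + - x)) with 0 by ring.
    rewrite sumN_Sl, (sumN_zero K (fun m => c 0%nat (S m) * 0 ^ S m))
      by (intros; rewrite Zpow; ring).
    simpl; ring. }
  assert (Hc00 : c 0%nat 0%nat = 0).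
  { specialize (Ht_part 0 ltac:(lra)). rewrite sumN_Sl, sumN_zero in Ht_part
      by (intros; rewrite Zpow; ring). simpl in Ht_part; lra. }
  intros x y [Hx [Hy Hxy]]. rewrite E, bipoly_split, Ht_part by lra.
  specialize (Hu_part x ltac:(lra)). lra.
Qed.

Lemma continuous_plusR (f g : R -> R) x :
  continuous f x -> continuous g x -> continuous (fun y => f y + g y) x.
Proof. intros Hf Hg; exact (continuous_plus f g x Hf Hg). Qed.

Lemma continuous_multR (f g : R -> R) x :
  continuous f x -> continuous g x -> continuous (fun y => f y * g y) x.
Proof. intros Hf Hg; exact (continuous_mult f g x Hf Hg). Qed.

Lemma continuous_pow (f : R -> R) x n : continuous f x -> continuous (fun y => f y ^ n) x.
Proof. intros H; induction n; simpl; [apply continuous_const | apply continuous_multR; auto]. Qed.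

Lemma continuous_sumN N (F : nat -> R -> R) x : (forall i, (i < N)%nat -> continuous (F i) x) ->
  continuous (fun y => sumN N (fun i => F i y)) x.
Proof.
  induction N; intros H; [apply continuous_const |].
  apply (continuous_ext (fun y => sumN N (fun i => F i y) + F N y));
    [intros; rewrite sumN_S; auto |].
  apply continuous_plusR; auto.
Qed.

Lemma poly_continuous_along q G (g h : R -> R) z : poly_in coord_r coord_s q G ->
  continuous g z -> continuous h z -> continuous (fun t => G (g t) (h t)) z.
Proof.
  intros [K [c [_ [_ Hc]]]] Hg Hh.
  apply (continuous_ext (fun t => bipoly K c (g t) (h t))); [intros; rewrite Hc; reflexivity |].
  apply continuous_sumN; intros; apply continuous_sumN; intros.
  repeat apply continuous_multR; try apply continuous_const; apply continuous_pow; auto.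
Qed.

Lemma poly_continuous_slice q G x z : poly_in coord_r coord_s q G -> continuous (fun s => G x s) z.
Proof.
  intros HG. apply (poly_continuous_along q G); auto using continuous_const, continuous_id.
Qed.

Lemma poly_continuous_line q G x0 y0 al be z : poly_in coord_r coord_s q G ->
  continuous (fun t => G (x0 + t * al) (y0 + t * be)) z.
Proof.
  intros HG. apply (poly_continuous_along q G); auto;
    apply continuous_plusR; auto using continuous_const, continuous_multR, continuous_id.
Qed.

(** * Integrals of polynomials over Omega_ref *)

Lemma Rint_RInt (f : R -> R) a b : ex_RInt f a b -> Rint f a b = RInt f a b.
Proof.
  intros H. unfold Rint.
  destruct (ClassicalDescription.excluded_middle_informative
              (inhabited (Riemann_integrable f a b))) as [Hi | Hi].
  - symmetry; apply RInt_Reals.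
  - exfalso; apply Hi; constructor; apply ex_RInt_Reals_0; auto.
Qed.

Lemma ex_RInt_cont (f : R -> R) a b : (forall z, continuous f z) -> ex_RInt f a b.
Proof. intros; apply (@ex_RInt_continuous R_CompleteNormedModule); auto. Qed.

Lemma RInt_plusR (f g : R -> R) a b : ex_RInt f a b -> ex_RInt g a b ->
  RInt (fun x => f x + g x) a b = RInt f a b + RInt g a b.
Proof. intros Hf Hg; exact (@RInt_plus R_CompleteNormedModule f g a b Hf Hg). Qed.

Lemma RInt_scalR (f : R -> R) k a b : ex_RInt f a b -> RInt (fun x => k * f x) a b = k * RInt f a b.
Proof. intros Hf; exact (@RInt_scal R_CompleteNormedModule f a b k Hf). Qed.

Lemma RInt_sumN N (F : nat -> R -> R) a b : (forall i z, continuous (F i) z) ->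
  RInt (fun s => sumN N (fun i => F i s)) a b = sumN N (fun i => RInt (F i) a b).
Proof.
  intros Hc; induction N.
  - rewrite (RInt_ext _ (fun _ => 0 * 0)) by (intros; unfold sumN; simpl; ring).
    rewrite RInt_scalR; [apply Rmult_0_l | apply ex_RInt_cont; intros; apply continuous_const].
  - rewrite sumN_S, <- IHN, (RInt_ext _ (fun s => sumN N (fun i => F i s) + F N s))
      by (intros; apply sumN_S).
    apply RInt_plusR; apply ex_RInt_cont; intros; auto. apply continuous_sumN; auto.
Qed.

Lemma continuous_RInt_upper (g : R -> R) a b : (forall z, continuous g z) ->
  continuous (fun b => RInt g a b) b.
Proof.
  intros Hg. apply (continuous_RInt_1 g a b).
  apply filter_forall; intros; apply (@RInt_correct R_CompleteNormedModule), ex_RInt_cont; auto.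
Qed.

Definition inner (G : R -> R -> R) (r : R) : R := RInt (fun s => G r s) (-1) (- r).

Lemma inner_continuous q G z : poly_in coord_r coord_s q G -> continuous (inner G) z.
Proof.
  intros [K [c [_ [_ Hc]]]].
  set (g := fun n s => sumN K (fun m => c n m * s ^ m)).
  assert (Hg : forall n z, continuous (g n) z).
  { intros n z0; apply continuous_sumN; intros.
    apply continuous_multR; [apply continuous_const | apply continuous_pow, continuous_id]. }
  apply (continuous_ext (fun r => sumN K (fun n => r ^ n * RInt (g n) (-1) (- r)))).
  - intros r. unfold inner. rewrite (RInt_ext _ (fun s => sumN K (fun n => r ^ n * g n s))).
    + rewrite RInt_sumN.
      * apply sumN_ext; intros; rewrite RInt_scalR; auto. apply ex_RInt_cont; auto.
      * intros i z0; apply continuous_multR; [apply continuous_const | auto].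
    + intros s _; rewrite Hc; unfold bipoly, coord_r, coord_s, g.
      apply sumN_ext; intros; rewrite <- sumN_scal; apply sumN_ext; intros; ring.
  - apply continuous_sumN; intros; apply continuous_multR; [apply continuous_pow, continuous_id |].
    apply (continuous_comp (fun r => - r) (fun b => RInt (g i) (-1) b)).
    + apply (@continuous_opp R_UniformSpace R_AbsRing R_NormedModule (fun r => r)), continuous_id.
    + apply continuous_RInt_upper; auto.
Qed.

Lemma int_ref_RInt q G : poly_in coord_r coord_s q G -> int_ref G = RInt (inner G) (-1) 1.
Proof.
  intros HG. unfold int_ref.
  replace (fun r => Rint (fun s => G r s) (-1) (- r)) with (inner G).
  - apply Rint_RInt, ex_RInt_cont; intros; eapply inner_continuous; eauto.
  - apply functional_extensionality; intros r; unfold inner; symmetry.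
    apply Rint_RInt, ex_RInt_cont; intros; eapply poly_continuous_slice; eauto.
Qed.

Lemma int_ref_plus q F G : poly_in coord_r coord_s q F -> poly_in coord_r coord_s q G ->
  int_ref (fun x y => F x y + G x y) = int_ref F + int_ref G.
Proof.
  intros HF HG.
  rewrite (int_ref_RInt q F), (int_ref_RInt q G), (int_ref_RInt q)
    by (auto; apply poly_in_add; auto).
  rewrite <- RInt_plusR by (apply ex_RInt_cont; intros; eapply inner_continuous; eauto).
  apply RInt_ext; intros r _. unfold inner.
  apply RInt_plusR; apply ex_RInt_cont; intros; eapply poly_continuous_slice; eauto.
Qed.

Lemma int_ref_scal q k F : poly_in coord_r coord_s q F ->
  int_ref (fun x y => k * F x y) = k * int_ref F.
Proof.
  intros HF. rewrite (int_ref_RInt q F), (int_ref_RInt q) by (auto; apply poly_in_scal; auto).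
  rewrite <- RInt_scalR by (apply ex_RInt_cont; intros; eapply inner_continuous; eauto).
  apply RInt_ext; intros r _. unfold inner.
  apply RInt_scalR, ex_RInt_cont; intros; eapply poly_continuous_slice; eauto.
Qed.

Lemma int_ref_lincomb q N (w : nat -> R) (F : nat -> R -> R -> R) :
  (forall i, (i < N)%nat -> poly_in coord_r coord_s q (F i)) ->
  int_ref (fun x y => sumN N (fun i => w i * F i x y)) = sumN N (fun i => w i * int_ref (F i)).
Proof.
  induction N; intros H.
  - replace (fun x y : R => sumN 0 (fun i => w i * F i x y)) with (fun _ _ : R => 0 * 0)
      by (do 2 (apply functional_extensionality; intro); unfold sumN; simpl; ring).
    rewrite (int_ref_scal 0 0 (fun _ _ => 0)); [unfold sumN; simpl; ring | apply poly_in_const].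
  - replace (fun x y => sumN (S N) (fun i => w i * F i x y)) with
      (fun x y => sumN N (fun i => w i * F i x y) + w N * F N x y)
      by (do 2 (apply functional_extensionality; intro); rewrite sumN_S; auto).
    rewrite (int_ref_plus q), (int_ref_scal q), IHN, sumN_S; auto.
    + apply poly_in_sum; intros; apply poly_in_scal; auto.
    + apply poly_in_scal; auto.
Qed.

(** * Positivity and vanishing *)

Lemma continuous_delta (f : R -> R) c : continuous f c -> forall eps, 0 < eps ->
  exists al, 0 < al /\ forall z, Rabs (z - c) < al -> Rabs (f z - f c) < eps.
Proof.
  intros H eps He. apply continuity_pt_filterlim in H.
  destruct (H eps) as [al [Hal Hz]]; [lra |]. exists al; split; [lra |]. intros z Hzc.
  destruct (Req_dec z c) as [-> | Hne]; [rewrite Rminus_diag, Rabs_R0; auto |].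
  apply (Hz z); split; [split; [constructor | auto] | exact Hzc].
Qed.

Lemma RInt_pos_at_point (phi : R -> R) a b c : (forall z, continuous phi z) -> a < c < b ->
  (forall z, a < z < b -> 0 <= phi z) -> 0 < phi c -> 0 < RInt phi a b.
Proof.
  intros Hc Hab Hp Hpc.
  destruct (continuous_delta phi c (Hc c) (phi c / 2)) as [al [Hal Hz]]; [lra |].
  set (a' := Rmax a (c - al / 2)). set (b' := Rmin b (c + al / 2)).
  assert (Ha' : a <= a' < c) by (unfold a'; split; [apply Rmax_l | apply Rmax_lub_lt; lra]).
  assert (Hb' : c < b' <= b) by (unfold b'; split; [apply Rmin_glb_lt; lra | apply Rmin_l]).
  assert (Ex : forall u v, ex_RInt phi u v) by (intros; apply ex_RInt_cont; auto).
  assert (Split : RInt phi a b = RInt phi a a' + (RInt phi a' b' + RInt phi b' b)).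
  { change (RInt phi a b = plus (RInt phi a a') (plus (RInt phi a' b') (RInt phi b' b))).
    rewrite !RInt_Chasles; auto. }
  assert (Hleft : 0 <= RInt phi a a') by (apply RInt_ge_0; [lra | auto | intros; apply Hp; lra]).
  assert (Hright : 0 <= RInt phi b' b) by (apply RInt_ge_0; [lra | auto | intros; apply Hp; lra]).
  assert (Hmid : 0 < RInt phi a' b').
  { apply RInt_gt_0; [lra | | intros; auto]. intros z Hzr.
    assert (Hzc : Rabs (z - c) < al).
    { pose proof (Rmax_r a (c - al / 2)). pose proof (Rmin_r b (c + al / 2)).
      apply Rabs_def1; unfold a', b' in Hzr; lra. }
    specialize (Hz z Hzc). apply Rabs_def2 in Hz. lra. }
  lra.
Qed.

Lemma nonneg_zero_integral q G : poly_in coord_r coord_s q G ->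
  (forall x y, in_tri x y -> 0 <= G x y) -> int_ref G = 0 ->
  forall x y, -1 < x -> -1 < y -> x + y < 0 -> G x y = 0.
Proof.
  intros HG Hpos H0 x y Hx Hy Hxy.
  destruct (Req_dec (G x y) 0) as [| Hne]; auto. exfalso.
  assert (Hgt : 0 < G x y) by (pose proof (Hpos x y ltac:(unfold in_tri; lra)); lra).
  assert (Hin : 0 < inner G x).
  { apply RInt_pos_at_point with y; auto; [intros; eapply poly_continuous_slice; eauto | lra |].
    intros z Hz; apply Hpos; unfold in_tri; lra. }
  rewrite (int_ref_RInt q) in H0; auto.
  enough (0 < RInt (inner G) (-1) 1) by lra.
  apply RInt_pos_at_point with x; auto; [intros; eapply inner_continuous; eauto | lra |].
  intros r Hr. unfold inner.
  apply RInt_ge_0; [lra | apply ex_RInt_cont; intros; eapply poly_continuous_slice; eauto |].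
  intros s Hs; apply Hpos; unfold in_tri; lra.
Qed.

Lemma continuous_zero_at_0 (phi : R -> R) : continuous phi 0 ->
  (forall t, 0 < t <= 1 -> phi t = 0) -> phi 0 = 0.
Proof.
  intros Hc Hz. destruct (Req_dec (phi 0) 0) as [| Hne]; auto. exfalso.
  destruct (continuous_delta phi 0 Hc (Rabs (phi 0))) as [al [Hal Hd]]; [apply Rabs_pos_lt; auto |].
  set (t := Rmin (al / 2) 1).
  assert (Ht : 0 < t <= 1) by (unfold t; split; [apply Rmin_glb_lt; lra | apply Rmin_r]).
  assert (Hta : Rabs (t - 0) < al).
  { rewrite Rminus_0_r, Rabs_right by lra. pose proof (Rmin_l (al / 2) 1). unfold t; lra. }
  specialize (Hd t Hta). rewrite Hz, Rminus_0_l, Rabs_Ropp in Hd by auto. lra.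
Qed.

(* A polynomial vanishing in the interior of Omega_ref vanishes on all of it:
   approach each point along the segment towards the centroid. *)
Lemma interior_zero_closed q G : poly_in coord_r coord_s q G ->
  (forall x y, -1 < x -> -1 < y -> x + y < 0 -> G x y = 0) ->
  forall x y, in_tri x y -> G x y = 0.
Proof.
  intros HG Hint x y [Hx [Hy Hxy]].
  pose proof (continuous_zero_at_0 (fun t => G (x + t * (-1/3 - x)) (y + t * (-1/3 - y)))
    (poly_continuous_line q G _ _ _ _ 0 HG)) as Hc.
  replace x with (x + 0 * (-1/3 - x)) by ring. replace y with (y + 0 * (-1/3 - y)) by ring.
  apply Hc. intros t Ht. apply Hint.
  - assert (0 <= (1 - t) * (x + 1)) by (apply Rmult_le_pos; lra). nra.
  - assert (0 <= (1 - t) * (y + 1)) by (apply Rmult_le_pos; lra). nra.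
  - assert (0 <= (1 - t) * - (x + y)) by (apply Rmult_le_pos; lra). nra.
Qed.

Lemma kind_eqb_true k k' : kind_eqb k k' = true <-> k = k'.
Proof. destruct k as [[]|[]|], k' as [[]|[]|]; simpl; split; intro; congruence. Qed.

Lemma in_kind_filter N kd k i :
  In i (filter (fun j => kind_eqb (kd j) k) (seq 0 N)) <-> (i < N)%nat /\ kd i = k.
Proof. rewrite filter_In, in_seq, kind_eqb_true; intuition lia. Qed.

Lemma count_kind_one N kd k : count_kind N kd k = 1%nat ->
  exists i, (i < N)%nat /\ kd i = k /\ forall j, (j < N)%nat -> kd j = k -> j = i.
Proof.
  unfold count_kind. destruct (filter _ (seq 0 N)) as [| i [|]] eqn:E; simpl; intros H; try lia.
  assert (Hi : (i < N)%nat /\ kd i = k) by (apply in_kind_filter; rewrite E; left; auto).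
  exists i; repeat split; try apply Hi. intros j Hj Hkj.
  assert (Hjn : In j (filter (fun i => kind_eqb (kd i) k) (seq 0 N)))
    by (apply in_kind_filter; auto).
  rewrite E in Hjn; destruct Hjn as [| []]; auto.
Qed.

Lemma count_kind_pos N kd k : (1 <= count_kind N kd k)%nat -> exists i, (i < N)%nat /\ kd i = k.
Proof.
  unfold count_kind. destruct (filter _ (seq 0 N)) as [| i l] eqn:E; simpl; intros H; try lia.
  exists i. apply in_kind_filter; rewrite E; left; auto.
Qed.

Lemma vertex_in_tri l : in_tri (fst (vertex l)) (snd (vertex l)).
Proof. destruct l; unfold in_tri; simpl; lra. Qed.

(* Only the vertex function of a vertex can be nonzero there: every vertex lies
   on two edges, so every edge and interior function vanishes at it. *)
Lemma vanish_at_vertex l k f : has_kind k f -> k <> KVert l ->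
  f (fst (vertex l)) (snd (vertex l)) = 0.
Proof.
  intros Hk Hne. destruct k as [l' | l' |]; simpl in Hk.
  - destruct (Req_dec (f (fst (vertex l)) (snd (vertex l))) 0) as [| Hnz]; auto.
    exfalso; apply Hne; f_equal; symmetry; apply (proj1 Hk l); auto.
  - destruct Hk as [_ Hv].
    destruct l, l'; simpl;
      first [ apply (Hv LA); [congruence | simpl; lra]
            | apply (Hv LB); [congruence | simpl; lra]
            | apply (Hv LC); [congruence | simpl; lra] ].
  - destruct Hk as [_ Hv].
    destruct l; simpl; [apply (Hv LB) | apply (Hv LA) | apply (Hv LA)]; simpl; lra.
Qed.

Lemma vanish_on_edge_A k f r : has_kind k f ->
  k <> KVert LB -> k <> KVert LC -> k <> KEdge LA -> -1 <= r <= 1 -> f r (-1) = 0.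
Proof.
  intros Hk HB HC HA Hr. destruct k as [[]|[]|]; simpl in Hk; try congruence;
    destruct Hk as [_ Hv]; first [apply Hv | apply (Hv LA)]; simpl; try congruence; lra.
Qed.

Section NoDiagonalPseudoMass.

Variables (p : nat) (psi : nat -> R -> R -> R) (d : nat -> R) (kd : nat -> kind).
Let N := dimT p.
Hypothesis p_ge_2 : (2 <= p)%nat.
Hypothesis psi_in_T : forall i, (i < N)%nat -> in_T p (psi i).
Hypothesis psi_indep : forall w : nat -> R,
  (forall r s, in_tri r s -> sumN N (fun i => w i * psi i r s) = 0) ->
  forall i, (i < N)%nat -> w i = 0.
Hypothesis psi_kind : forall i, (i < N)%nat -> has_kind (kd i) (psi i).
Hypothesis one_vertex_function : forall l, count_kind N kd (KVert l) = 1%nat.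
Hypothesis some_edge_A_function : (1 <= count_kind N kd (KEdge LA))%nat.
Hypothesis d_nonzero : forall i, (i < N)%nat -> d i <> 0.
Hypothesis exact : diag_pseudo_mass_exact (p - 1) N psi d.

Lemma psi_poly i : (i < N)%nat -> poly_in coord_r coord_s p (psi i).
Proof. intros; apply in_T_poly_in, psi_in_T; auto. Qed.

Definition pm_coef (f : R -> R -> R) (i : nat) : R :=
  / d i * int_ref (fun x y => f x y * psi i x y).

(* If f in T(p-1) vanishes at a vertex, the coefficient of that vertex's
   function vanishes: exactness at the vertex sees only that function. *)
Lemma vertex_coef_zero l f : in_T (p - 1) f -> f (fst (vertex l)) (snd (vertex l)) = 0 ->
  forall i, (i < N)%nat -> kd i = KVert l -> pm_coef f i = 0.
Proof.
  intros Hf Hz i Hi Hki.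
  destruct (count_kind_one N kd (KVert l) (one_vertex_function l)) as [iV [HiV [HkV Huniq]]].
  rewrite (Huniq i Hi Hki).
  pose proof (exact f Hf _ _ (vertex_in_tri l)) as Hsum.
  rewrite (sumN_single N _ iV) in Hsum; auto.
  - rewrite Hz in Hsum. apply Rmult_integral in Hsum as [| Hpsi]; auto. exfalso.
    pose proof (psi_kind iV HiV) as HV. rewrite HkV in HV.
    apply (proj2 (proj1 HV l) eq_refl), Hpsi.
  - intros j Hj Hne. rewrite (vanish_at_vertex l (kd j) (psi j) (psi_kind j Hj)); [ring |].
    intros E; apply Hne, Huniq; auto.
Qed.

Definition edge_weight (r0 : R) (j : nat) : R :=
  if kind_eqb (kd j) (KEdge LA) then psi j r0 (-1) / d j else 0.

Definition edge_comb (r0 x y : R) : R := sumN N (fun j => edge_weight r0 j * psi j x y).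

Lemma edge_comb_poly r0 : poly_in coord_r coord_s p (edge_comb r0).
Proof. apply poly_in_sum; intros; apply poly_in_scal, psi_poly; auto. Qed.

(* Edge functions of E_A vanish on the other two edges, hence so does edge_comb. *)
Lemma edge_comb_off_edge_A r0 l r s : l <> LA -> on_edge l r s -> edge_comb r0 r s = 0.
Proof.
  intros Hl Ho. apply sumN_zero; intros j Hj. unfold edge_weight.
  destruct (kind_eqb (kd j) (KEdge LA)) eqn:E; [| ring].
  apply kind_eqb_true in E. pose proof (psi_kind j Hj) as Hk. rewrite E in Hk.
  rewrite (proj2 Hk l r s); auto; ring.
Qed.

(* Exactness on E_A: for f in T(p-1) vanishing on E_A, the vertex functions of
   V_B, V_C have zero coefficient and the other functions vanish on E_A, so
   exactness at (r0,-1) reads  int f * edge_comb r0 = f(r0,-1) = 0. *)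
Lemma edge_trace_identity r0 f : -1 <= r0 <= 1 -> in_T (p - 1) f ->
  (forall r, -1 <= r <= 1 -> f r (-1) = 0) ->
  int_ref (fun x y => f x y * edge_comb r0 x y) = 0.
Proof.
  intros Hr0 Hf HfA.
  assert (HfV : forall l, snd (vertex l) = -1 -> f (fst (vertex l)) (snd (vertex l)) = 0).
  { intros l Hs. rewrite Hs. apply HfA. destruct l; simpl in *; lra. }
  replace (fun x y => f x y * edge_comb r0 x y)
    with (fun x y => sumN N (fun j => edge_weight r0 j * (f x y * psi j x y)))
    by (do 2 (apply functional_extensionality; intro); unfold edge_comb;
        rewrite <- sumN_scal; apply sumN_ext; intros; ring).
  rewrite (int_ref_lincomb (p - 1 + p))
    by (intros; apply poly_in_mul; [apply in_T_poly_in; auto | apply psi_poly; auto]).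
  rewrite <- (HfA r0 Hr0), <- (exact f Hf r0 (-1)) by (unfold in_tri; lra).
  apply sumN_ext; intros j Hj. fold (pm_coef f j). unfold edge_weight.
  destruct (kind_eqb (kd j) (KEdge LA)) eqn:E.
  - unfold pm_coef. field. auto.
  - pose proof (psi_kind j Hj) as Hk. rewrite Rmult_0_l.
    destruct (kd j) as [[]|[]|] eqn:Ekj; rewrite ?Ekj in E; try discriminate E;
      first [ rewrite (vertex_coef_zero LB f Hf (HfV LB eq_refl) j Hj Ekj)
            | rewrite (vertex_coef_zero LC f Hf (HfV LC eq_refl) j Hj Ekj)
            | rewrite (vanish_on_edge_A _ _ r0 Hk) by (congruence || lra) ]; ring.
Qed.

(* Writing
   edge_comb r0 = u t H, the function f = (s+1) H is admissible in
   edge_trace_identity and f * edge_comb r0 = (s+1) u t H^2 >= 0. *)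
Lemma edge_comb_vanishes r0 : -1 <= r0 <= 1 -> forall x y, in_tri x y -> edge_comb r0 x y = 0.
Proof.
  intros Hr0.
  destruct (factor_edges_BC p (edge_comb r0) (rs_to_ut _ _ (edge_comb_poly r0))) as [H [HH Hfac]].
  { intros; apply (edge_comb_off_edge_A r0 LB); [congruence | auto]. }
  { intros; apply (edge_comb_off_edge_A r0 LC); [congruence | auto]. }
  apply ut_to_rs in HH.
  set (f := fun x y => (y + 1) * H x y).
  assert (Hf : poly_in coord_r coord_s (p - 1) f).
  { replace (p - 1)%nat with (1 + (p - 2))%nat by lia. apply poly_in_mul; auto.
    apply (poly_in_ext _ _ _ (fun x y => 0 * coord_r x y + 1 * coord_s x y + 1)), poly_in_affine.
    intros; unfold coord_r, coord_s; ring. }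
  assert (Hprod : forall x y, in_tri x y ->
    f x y * edge_comb r0 x y = (y + 1) * (x + 1) * - (x + y) * (H x y * H x y)).
  { intros x y Ht; unfold f; rewrite Hfac by auto; unfold coord_u, coord_t; ring. }
  assert (Hzero : forall x y, -1 < x -> -1 < y -> x + y < 0 -> f x y * edge_comb r0 x y = 0).
  { apply (nonneg_zero_integral (p - 1 + p)).
    - apply poly_in_mul; auto. apply edge_comb_poly.
    - intros x y Ht; rewrite Hprod by auto. destruct Ht as [? [? ?]].
      apply Rmult_le_pos; [| apply Rle_0_sqr]. repeat apply Rmult_le_pos; lra.
    - apply edge_trace_identity; auto; [apply poly_in_in_T; auto |]. intros; unfold f; ring. }
  apply (interior_zero_closed p); [apply edge_comb_poly |].
  intros x y Hx Hy Hxy. specialize (Hzero x y Hx Hy Hxy).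
  rewrite Hprod in Hzero by (unfold in_tri; lra).
  rewrite Hfac by (unfold in_tri; lra). unfold coord_u, coord_t.
  assert (Hweight : 0 < (y + 1) * (x + 1) * - (x + y)) by (repeat apply Rmult_lt_0_compat; lra).
  apply Rmult_integral in Hzero as [| HH0]; [lra |].
  apply Rmult_integral in HH0 as [Hz | Hz]; rewrite Hz; ring.
Qed.

(* Contradiction: an edge function psi_e of E_A is nonzero at some (r0,-1),
   yet linear independence applied to edge_comb r0 = 0 gives w_e = 0. *)
Lemma no_diagonal_pseudo_mass : False.
Proof.
  destruct (count_kind_pos N kd (KEdge LA) some_edge_A_function) as [e [He Hke]].
  pose proof (psi_kind e He) as Hk. rewrite Hke in Hk.
  destruct Hk as [[r0 [s0 [[Hr0 Hs0] Hnz]]] _]. subst s0.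
  assert (Hw : edge_weight r0 e = 0).
  { apply psi_indep; auto. intros; apply edge_comb_vanishes; auto. }
  unfold edge_weight in Hw. rewrite Hke in Hw. simpl in Hw.
  apply Hnz. replace (psi e r0 (-1)) with (psi e r0 (-1) / d e * d e) by (field; auto).
  rewrite Hw; ring.
Qed.

End NoDiagonalPseudoMass.

Theorem theorem3p2 (p : nat) (hp : (2 <= p)%nat) :
  ~ exists (psi : nat -> R -> R -> R) (d : nat -> R),
      is_basis p psi /\ fe_suitable p psi /\
      (forall i, (i < dimT p)%nat -> d i <> 0) /\
      diag_pseudo_mass_exact (p - 1) (dimT p) psi d.
Proof.
  intros [psi [d [[Hin [Hind _]] [[kd [Hkind [Hvert [Hedge _]]]] [Hd Hexact]]]]].
  apply (no_diagonal_pseudo_mass p psi d kd); auto.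
  rewrite Hedge; lia.
Qed.
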